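(* Let $G$ be a t.d.l.c. group acting Weyl-transitively on a locally finite thick building $\Delta$ with compact stabilisers. Then $G$ has the double coset property and, in particular, $G$ is $N$-compact.
   Context: $\Delta=(\mathcal{C},\delta)$ is a building of type $(W,S)$ ($S$ finite), locally finite if $\{d\mid\delta(c,d)=s\}$ is finite for all $c\in\mathcal{C}$, $s\in S$, and thick if every $\{s\}$-residue ($s\in S$) contains at least three chambers. $G$ acts via a continuous homomorphism to the group of type-preserving automorphisms of $\Delta$ with the permutation topology, and chamber stabilisers are compact. The action is Weyl-transitive if for each $w\in W$, $G$ acts transitively on $\{(c,d)\in\mathcal{C}\times\mathcal{C}\mid\delta(c,d)=w\}$. For a compact open subgroup $\mathcal{O}\le G$ let $\mu_\mathcal{O}$ be the left Haar measure with $\mu_\mathcal{O}(\mathcal{O})=1$ and $R_\mathcal{O}(n)=|\{\mathcal{O}g\mathcal{O}\in\mathcal{O}\backslash G/\mathcal{O}\mid\mu_\mathcal{O}(\mathcal{O}g\mathcal{O})=n\}|$. $G$ has the double coset property if $R_\mathcal{O}(n)<\infty$ for every $n\ge1$ (this is independent of the choice of $\mathcal{O}$). $G$ is $N$-compact if every compact open subgroup of $G$ has compact normaliser. *)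

From HB Require Import structures.
From mathcomp Require Import all_boot all_order.
From mathcomp Require Import all_classical all_reals all_analysis.

Set Implicit Arguments.
Unset Strict Implicit.
Unset Printing Implicit Defensive.

Local Open Scope classical_set_scope.

Definition is_group (T : Type) (mul : T -> T -> T) (one : T) (inv : T -> T) :=
  [/\ associative mul, left_id one mul, right_id one mul,
      left_inverse one inv mul & right_inverse one inv mul].

Fixpoint gpow (T : Type) (mul : T -> T -> T) (one : T) (x : T) (n : nat) : T :=
  if n is n'.+1 then mul x (gpow mul one x n') else one.

Definition wprod (T : Type) (mul : T -> T -> T) (one : T) (s : seq T) : T :=
  foldr mul one s.

Definition is_subgroup (T : Type) (mul : T -> T -> T) (one : T) (inv : T -> T)
  (H : set T) :=
  [/\ H one, (forall x y, H x -> H y -> H (mul x y)) & (forall x, H x -> H (inv x))].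

(* S generates W (as a monoid; S consists of involutions) *)
Definition generates (W : Type) (mulW : W -> W -> W) (oneW : W) (S : set W) :=
  forall w, exists s : seq W, (forall i, (i < size s)%N -> S (nth oneW s i)) /\ wprod mulW oneW s = w.

(* (W,S) is a Coxeter system: W is a group, S a set of involutions generating W,
   and W has the presentation < S | (st)^{m(s,t)} = 1 >, where m(s,t) is the order
   of st in W; i.e. any map f from S into a group H satisfying every relation
   (st)^m = 1 holding in W extends to a homomorphism W -> H. *)
Definition coxeter_system (W : Type) (mulW : W -> W -> W) (oneW : W) (invW : W -> W)
  (S : set W) :=
  [/\ is_group mulW oneW invW,
      (forall s, S s -> s <> oneW /\ mulW s s = oneW),
      generates mulW oneW S &
      forall (H : Type) (mulH : H -> H -> H) (oneH : H) (invH : H -> H) (f : W -> H),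
        is_group mulH oneH invH ->
        (forall s t (m : nat), S s -> S t ->
            gpow mulW oneW (mulW s t) m = oneW ->
            gpow mulH oneH (mulH (f s) (f t)) m = oneH) ->
        exists phi : W -> H,
          (forall x y, phi (mulW x y) = mulH (phi x) (phi y)) /\
          (forall s, S s -> phi s = f s)].

Definition word_of_length (W : Type) (mulW : W -> W -> W) (oneW : W) (S : set W)
  (w : W) (n : nat) :=
  exists s : seq W, [/\ size s = n, (forall i, (i < size s)%N -> S (nth oneW s i)) & wprod mulW oneW s = w].

Definition coxeter_length (W : Type) (mulW : W -> W -> W) (oneW : W) (S : set W)
  (w : W) (n : nat) :=
  word_of_length mulW oneW S w n /\
  forall m, word_of_length mulW oneW S w m -> (n <= m)%N.

Definition is_building (W : Type) (mulW : W -> W -> W) (oneW : W) (S : set W)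
  (C : Type) (delta : C -> C -> W) :=
  [/\ (exists c : C, True),
      (forall c d, delta c d = oneW <-> c = d),
      (forall c d c' s, S s -> delta c' c = s ->
          (delta c' d = mulW s (delta c d) \/ delta c' d = delta c d) /\
          (forall n, coxeter_length mulW oneW S (delta c d) n ->
                     coxeter_length mulW oneW S (mulW s (delta c d)) n.+1 ->
                     delta c' d = mulW s (delta c d))) &
      (forall c d s, S s -> exists c', delta c' c = s /\ delta c' d = mulW s (delta c d))].

Definition locally_finite_building (W : Type) (S : set W) (C : Type)
  (delta : C -> C -> W) :=
  forall c s, S s -> finite_set [set d | delta c d = s].

(* the {s}-residue of c is {d | delta c d \in {1, s}}; thick: it has >= 3 chambers *)
Definition thick_building (W : Type) (oneW : W) (S : set W) (C : Type)
  (delta : C -> C -> W) :=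
  forall c s, S s ->
    exists d1 d2 d3 : C,
      [/\ delta c d1 = oneW \/ delta c d1 = s,
          delta c d2 = oneW \/ delta c d2 = s,
          delta c d3 = oneW \/ delta c d3 = s &
          [/\ d1 <> d2, d1 <> d3 & d2 <> d3]].

Definition topological_group (G : topologicalType) (mul : G -> G -> G) (one : G)
  (inv : G -> G) :=
  [/\ is_group mul one inv,
      continuous (fun p : G * G => mul p.1 p.2) & continuous inv].

Definition tdlc (G : topologicalType) :=
  [/\ hausdorff_space G, locally_compact [set: G] & totally_disconnected [set: G]].

Definition compact_open_subgroup (G : topologicalType) (mul : G -> G -> G) (one : G)
  (inv : G -> G) (O : set G) :=
  [/\ is_subgroup mul one inv O, compact O & open O].

Definition type_preserving_action (G : Type) (mul : G -> G -> G) (one : G)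
  (W : Type) (C : Type) (delta : C -> C -> W) (rho : G -> C -> C) :=
  [/\ (forall c, rho one c = c),
      (forall g h c, rho (mul g h) c = rho g (rho h c)) &
      (forall g c d, delta (rho g c) (rho g d) = delta c d)].

(* continuity of rho into Aut(Delta) with the permutation topology, whose basic
   neighbourhoods of phi are {psi | psi = phi on F}, F finite *)
Definition perm_continuous (G : topologicalType) (C : Type) (rho : G -> C -> C) :=
  forall (g : G) (F : set C), finite_set F ->
    \forall h \near g, forall c, F c -> rho h c = rho g c.

Definition compact_stabilisers (G : topologicalType) (C : Type) (rho : G -> C -> C) :=
  forall c : C, compact [set g : G | rho g c = c].

Definition weyl_transitive (G : Type) (W : Type) (C : Type) (delta : C -> C -> W)
  (rho : G -> C -> C) :=
  forall c d c' d', delta c d = delta c' d' ->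
    exists g, rho g c = c' /\ rho g d = d'.

Definition lcoset (G : Type) (mul : G -> G -> G) (h : G) (O : set G) : set G :=
  [set mul h x | x in O].

Definition double_coset (G : Type) (mul : G -> G -> G) (O : set G) (g : G) : set G :=
  [set mul (mul a g) b | a in O & b in O].

(* mu_O(D) = n for a union D of left O-cosets, mu_O the left Haar measure with
   mu_O(O) = 1: D is the disjoint union of exactly n left cosets hO. *)
Definition haar_measure_is (G : Type) (mul : G -> G -> G) (O : set G) (D : set G)
  (n : nat) :=
  ([set K : set G | exists h, K = lcoset mul h O /\ K `<=` D] #= `I_n)%card.

Definition double_coset_property (G : topologicalType) (mul : G -> G -> G) (one : G)
  (inv : G -> G) :=
  forall O : set G, compact_open_subgroup mul one inv O ->
    forall n : nat, (1 <= n)%N ->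
      finite_set [set D : set G | (exists g, D = double_coset mul O g) /\
                                  haar_measure_is mul O D n].

Definition normaliser (G : Type) (mul : G -> G -> G) (inv : G -> G) (O : set G) : set G :=
  [set g | forall x, O x <-> O (mul (mul g x) (inv g))].

Definition N_compact (G : topologicalType) (mul : G -> G -> G) (one : G)
  (inv : G -> G) :=
  forall O : set G, compact_open_subgroup mul one inv O ->
    compact (normaliser mul inv O).

From HB Require Import structures.
From mathcomp Require Import all_boot all_order.
From mathcomp Require Import all_classical all_reals all_analysis.
From mathcomp Require Import finmap zify.

(* Fix a chamber c0 with stabiliser B, a compact open subgroup O and U := O ∩ B.
   By compactness, finitely many (a) left translates xU cover B and finitely
   many (m) left translates yU cover O.  If OgO is a union of n left O-cosets and
   w = δ(c0, g c0), Weyl transitivity writes every chamber d with δ(c0, d) = w as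
   d = x k y c0 with x, y among the translating elements and k a representative
   of one of the n cosets, so there are at most a n m such chambers.  Thickness
   produces 2^ℓ(w) of them, so ℓ(w) <= a n m and w ranges over a finite set.
   Weyl transitivity once more gives OgO = O x^-1 g_w y O for a fixed g_w with
   δ(c0, g_w c0) = w, leaving finitely many double cosets of measure n.  The
   normaliser of O is the union of the cosets gO of measure 1 it contains, hence
   a finite union of compact sets. *)

Set Implicit Arguments.
Unset Strict Implicit.
Unset Printing Implicit Defensive.

Local Open Scope classical_set_scope.
Local Open Scope card_scope.

Lemma injfun_II_setU T (A B : set T) m n : A `&` B = set0 ->
  $|{injfun `I_m >-> A}| -> $|{injfun `I_n >-> B}| ->
  $|{injfun `I_(m + n) >-> A `|` B}|.
Proof.
move=> AB0 /injfunPex[f fA finj] /injfunPex[g gB ginj].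
have fg i j : (i < m)%N -> (j < n)%N -> f i <> g j.
  move=> im jn e; suff : (A `&` B) (f i) by rewrite AB0.
  by split; [exact: fA | rewrite e; exact: gB].
apply/injfunPex; exists (fun i => if (i < m)%N then f i else g (i - m)%N).
  move=> i /= imn; case: ifP => im; [left; exact: fA | right; apply: gB].
  by rewrite /= ltn_subLR // leqNgt im.
move=> i j /set_mem /= imn /set_mem /= jmn; case: ifP => im; case: ifP => jm.
- by apply: finj; apply/mem_set.
- by move=> e; exfalso; apply: (fg i (j - m)%N) => //; lia.
- by move=> e; exfalso; apply: (fg j (i - m)%N) => //; lia.
- move=> e; suff : (i - m = j - m)%N by lia.
  by apply: (ginj _ _ _ _ e); apply/mem_set => /=; lia.
Qed.

Lemma card_le_setX_II T U (A : set T) (B : set U) m n :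
  A #<= `I_m -> B #<= `I_n -> A `*` B #<= `I_(m * n).
Proof.
move=> /pcard_leP/injfunPex[f fA finj] /pcard_leP/injfunPex[g gB ginj].
pose h p := (f p.1 * n + g p.2)%N.
have hinj : {in A `*` B &, injective h}.
  move=> [x y] [x' y'] /set_mem[Ax By] /set_mem[Ax' By'] /=.
  have [gy gy'] : (g y < n)%N /\ (g y' < n)%N by split; [exact: gB | exact: gB].
  move=> e; have n0 : (0 < n)%N by apply: leq_ltn_trans gy.
  have ey : g y = g y'.
    by have := congr1 (modn^~ n) e; rewrite /h /= !modnMDl !modn_small.
  have ex : f x = f x'.
    by have := congr1 (divn^~ n) e; rewrite /h /= !divnMDl // !divn_small // !addn0.
  by congr pair; [apply: finj ex | apply: ginj ey]; exact: mem_set.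
rewrite -(card_le_eql (inj_card_eq hinj)); apply: subset_card_le.
move=> _ [[x y] [Ax By] <-]; have fx : (f x < m)%N by exact: fA.
have gy : (g y < n)%N by exact: gB.
rewrite /h /= (leq_trans (_ : _ < (f x).+1 * n)%N) //.
  by rewrite mulSn [(n + _)%N]addnC ltn_add2l.
by rewrite leq_mul2r fx orbT.
Qed.

Section CoxeterLength.
Variables (W : Type) (mulW : W -> W -> W) (oneW : W) (S : set W).

Lemma coxeter_length_unique w k k' : coxeter_length mulW oneW S w k ->
  coxeter_length mulW oneW S w k' -> k = k'.
Proof. by move=> [wk mink] [wk' mink']; apply/eqP; rewrite eqn_leq mink // mink'. Qed.

Lemma coxeter_length_exists w : generates mulW oneW S ->
  exists k, coxeter_length mulW oneW S w k.
Proof.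
move=> genS; have [s [sS <-]] := genS w.
have ex_len : exists k, `[< word_of_length mulW oneW S (wprod mulW oneW s) k >].
  by exists (size s); apply/asboolP; exists s.
have [k /asboolP wk mink] := ex_minnP ex_len.
by exists k; split => // m wm; apply/mink/asboolP.
Qed.

Lemma coxeter_length0 w : coxeter_length mulW oneW S w 0 -> w = oneW.
Proof. by move=> [[s [+ _ <-]] _]; case: s. Qed.

Lemma coxeter_lengthS w k : coxeter_length mulW oneW S w k.+1 ->
  exists s w', [/\ S s, w = mulW s w' & coxeter_length mulW oneW S w' k].
Proof.
move=> [[sr [srk srS <-]] mink]; case: sr srk srS mink => [//|s r] [rk] rS mink.
exists s, (wprod mulW oneW r); split => //; first exact: (rS 0%N).
split; first by exists r; split => // i; apply: (rS i.+1).
move=> m [r' [r'm r'S r'r]]; rewrite -ltnS; apply: mink.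
exists (s :: r'); split; [by rewrite /= r'm | | by rewrite /= r'r].
by case=> [|i] /=; [move=> _; exact: (rS 0%N) | exact: r'S].
Qed.

Definition word_ball L :=
  [set w | exists2 k, (k <= L)%N & word_of_length mulW oneW S w k].

Lemma finite_word_ball L : finite_set S -> finite_set (word_ball L).
Proof.
move=> finS; elim: L => [|L IH].
  apply: (sub_finite_set _ (finite_set1 oneW)) => w [k].
  by rewrite leqn0 => /eqP-> [s [+ _ <-]]; case: s.
apply: (sub_finite_set (B := word_ball L `|` [set mulW s v | s in S & v in word_ball L])).
  move=> w [k kL [s [sk sS <-]]]; have [{}kL|kL'] := leqP k L.
    by left; exists k => //; exists s.
  have k_eq : k = L.+1 by lia.
  case: s sk sS => [|s r]; rewrite k_eq // => -[rL] sS; right.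
  exists s; first exact: (sS 0%N).
  exists (wprod mulW oneW r) => //; exists L => //.
  by exists r; split => // i; apply: (sS i.+1).
by rewrite finite_setU; split => //; apply: finite_image2.
Qed.

End CoxeterLength.

Section Building.
Variables (W : Type) (mulW : W -> W -> W) (oneW : W) (invW : W -> W) (S : set W).
Variables (C : Type) (delta : C -> C -> W).
Hypotheses (HW : coxeter_system mulW oneW invW S) (HB : is_building mulW oneW S delta).

Lemma delta_eq1 c d : delta c d = oneW <-> c = d.
Proof. by case: HB => _ + _ _; apply. Qed.

Lemma delta_refl c : delta c c = oneW.
Proof. exact/delta_eq1. Qed.

Lemma delta_adjacent_mul c c' d s k : S s -> delta c' c = s ->
  coxeter_length mulW oneW S (delta c d) k ->
  coxeter_length mulW oneW S (mulW s (delta c d)) k.+1 ->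
  delta c' d = mulW s (delta c d).
Proof. by move=> Ss c'c; case: HB => _ _ wd2 _; apply: (wd2 c d c' s Ss c'c).2. Qed.

Lemma delta_adjacent_cases c c' d s : S s -> delta c' c = s ->
  delta c' d = mulW s (delta c d) \/ delta c' d = delta c d.
Proof. by move=> Ss c'c; case: HB => _ _ wd2 _; apply: (wd2 c d c' s Ss c'c).1. Qed.

Lemma generator_involutive s : S s -> s <> oneW /\ mulW s s = oneW.
Proof. by case: HW => _ + _ _; apply. Qed.

Lemma delta_adjacent_sym c d s : S s -> delta c d = s -> delta d c = s.
Proof.
move=> Ss cd; have [s_neq1 ss] := generator_involutive Ss.
have [[mulA mul1w mulw1 _ _] _ _ _] := HW.
case: (delta_adjacent_cases c Ss cd); rewrite delta_refl.
  by move=> e; rewrite -[delta d c]mul1w -ss -mulA -e mulw1.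
by move/esym/delta_eq1 => dc; case: s_neq1; rewrite -cd dc delta_refl.
Qed.

Lemma delta_adjacent_pair c c1 c2 s : S s -> delta c c1 = s -> delta c c2 = s ->
  c1 <> c2 -> delta c1 c2 = s.
Proof.
move=> Ss cc1 cc2 c12; have [_ ss] := generator_involutive Ss.
case: (delta_adjacent_cases c2 Ss (delta_adjacent_sym Ss cc1)) => [|->//].
by rewrite cc2 ss => /delta_eq1.
Qed.

Hypothesis HT : thick_building oneW S delta.

Lemma thick_two_neighbours c s : S s ->
  exists c1 c2, [/\ c1 <> c2, delta c c1 = s & delta c c2 = s].
Proof.
move=> Ss; have [d1 [d2 [d3 [cd1 cd2 cd3 [d12 d13 d23]]]]] := HT c Ss.
case: cd1 => [/delta_eq1 e1|cd1].
  subst d1; case: cd2 => [/delta_eq1 e|cd2]; first by case: d12.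
  case: cd3 => [/delta_eq1 e|cd3]; first by case: d13.
  by exists d2, d3.
case: cd2 => [/delta_eq1 e2|cd2]; last by exists d1, d2.
subst d2; case: cd3 => [/delta_eq1 e|cd3]; first by case: d23.
by exists d1, d3.
Qed.

Lemma injfun_II_sphere c w k : coxeter_length mulW oneW S w k ->
  $|{injfun `I_(2 ^ k) >-> [set d | delta c d = w]}|.
Proof.
elim: k w c => [|k IH] w c.
  move=> w0; rewrite (coxeter_length0 w0); apply/injfunPex; exists (fun=> c).
    by move=> i _; exact: delta_refl.
  by move=> i j; rewrite !in_setE /= => i1 j1 _; lia.
move=> sw'; have [s [w' [Ss ew w'k]]] := coxeter_lengthS sw'; subst w.
have [c1 [c2 [c12 cc1 cc2]]] := thick_two_neighbours c Ss.
have sphere_sub ci : delta c ci = s ->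
    [set d | delta ci d = w'] `<=` [set d | delta c d = mulW s w'].
  by move=> cci d /= cid; rewrite -cid (delta_adjacent_mul (k := k) Ss cci) ?cid.
have disj : [set d | delta c1 d = w'] `&` [set d | delta c2 d = w'] = set0.
  apply/seteqP; split => // d [/= c1d c2d].
  have c2c1 := delta_adjacent_pair Ss cc2 cc1 (nesym c12).
  have := delta_adjacent_mul (d := d) (k := k) Ss c2c1.
  rewrite c1d c2d => /(_ w'k sw') w'sw'.
  by move: w'k; rewrite {1}w'sw' => /(coxeter_length_unique sw'); lia.
have /injfunPex[f fA finj] := injfun_II_setU disj (IH w' c1 w'k) (IH w' c2 w'k).
rewrite expnS mul2n -addnn; apply/injfunPex; exists f => // i.
by move=> /fA [/(sphere_sub _ cc1)|/(sphere_sub _ cc2)].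
Qed.

End Building.

Lemma compact_finite_cover (T : topologicalType) (A : set T) (f : T -> set T) :
  compact A -> (forall x, open (f x)) -> (forall x, A x -> f x x) ->
  exists2 X, finite_set X & A `<=` \bigcup_(x in X) f x.
Proof.
move=> cA fo fx; have [->|/set0P[x0 _]] := eqVneq A set0.
  by exists set0; [exact: finite_set0 | move=> ?].
(* [compact_cover] is stated for pointed spaces; any point of A will do. *)
pose Tp := HB.pack_for ptopologicalType T (isPointed.Build T x0).
have : @compact Tp A := cA; rewrite compact_cover => cpA.
have [D _ cov] :=
  cpA T A f (fun x _ => fo x) (fun x Ax => ex_intro2 _ _ x Ax (fx x Ax)).
by exists [set` D]; [exact: finite_fset | move=> x /cov[y yD fy]; exists y].
Qed.

Lemma compact_bigcup_finite (T : topologicalType) (I : choiceType) (A : set I)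
    (F : I -> set T) :
  finite_set A -> (forall i, A i -> compact (F i)) -> compact (\bigcup_(i in A) F i).
Proof.
move=> finA cF; rewrite -bigsetU_fset_set // big_seq.
by apply: bigsetU_compact => i; rewrite in_fset_set // => /set_mem; exact: cF.
Qed.

Section Group.
Variables (G : Type) (mul : G -> G -> G) (one : G) (inv : G -> G).
Hypothesis Ggrp : is_group mul one inv.

Lemma mulgA : associative mul. Proof. by case: Ggrp. Qed.
Lemma mul1g : left_id one mul. Proof. by case: Ggrp. Qed.
Lemma mulg1 : right_id one mul. Proof. by case: Ggrp. Qed.
Lemma mulVg : left_inverse one inv mul. Proof. by case: Ggrp. Qed.
Lemma mulgV : right_inverse one inv mul. Proof. by case: Ggrp. Qed.

Lemma mulKg x y : mul (inv x) (mul x y) = y.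
Proof. by rewrite mulgA mulVg mul1g. Qed.

Lemma mulKVg x y : mul x (mul (inv x) y) = y.
Proof. by rewrite mulgA mulgV mul1g. Qed.

Lemma mulgK x y : mul (mul y x) (inv x) = y.
Proof. by rewrite -mulgA mulgV mulg1. Qed.

Lemma mulgKV x y : mul (mul y (inv x)) x = y.
Proof. by rewrite -mulgA mulVg mulg1. Qed.

Lemma invMg x y : inv (mul x y) = mul (inv y) (inv x).
Proof.
have e : mul (mul (inv y) (inv x)) (mul x y) = one by rewrite -mulgA mulKg mulVg.
by rewrite -[LHS]mul1g -e mulgK.
Qed.

Lemma invgK x : inv (inv x) = x.
Proof. by rewrite -[LHS]mul1g -(mulgV x) mulgK. Qed.

Section Subgroup.
Variable O : set G.
Hypothesis HO : is_subgroup mul one inv O.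

Lemma subgroup1 : O one. Proof. by case: HO. Qed.

Lemma subgroupM x y : O x -> O y -> O (mul x y). Proof. by case: HO => _ + _; apply. Qed.

Lemma subgroupV x : O x -> O (inv x). Proof. by case: HO => _ _; apply. Qed.

Lemma lcoset_refl g : lcoset mul g O g.
Proof. by exists one; [exact: subgroup1 | rewrite mulg1]. Qed.

Lemma lcosetMr g o : O o -> lcoset mul (mul g o) O = lcoset mul g O.
Proof.
move=> Oo; apply/seteqP; split=> _ [x Ox <-].
  by exists (mul o x); [exact: subgroupM | rewrite mulgA].
by exists (mul (inv o) x); [apply: subgroupM (subgroupV _) _ | rewrite -mulgA mulKVg].
Qed.

Lemma lcoset_eq g x : lcoset mul g O x -> lcoset mul x O = lcoset mul g O.
Proof. by case=> o Oo <-; exact: lcosetMr. Qed.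

Lemma double_cosetM u z u' : O u -> O u' ->
  double_coset mul O (mul (mul u z) u') = double_coset mul O z.
Proof.
move=> Ou Ou'; apply/seteqP; split=> _ [a Oa [b Ob <-]].
  exists (mul a u); first exact: subgroupM.
  by exists (mul u' b); [exact: subgroupM | rewrite !mulgA].
exists (mul a (inv u)); first exact/subgroupM/subgroupV.
exists (mul (inv u') b); first exact/subgroupM/Ob/subgroupV.
by rewrite !mulgA mulgKV -!mulgA mulKVg.
Qed.

Lemma lcoset_sub_double_coset u g : O u ->
  lcoset mul (mul u g) O `<=` double_coset mul O g.
Proof. by move=> Ou _ [x Ox <-]; exists u => //; exists x. Qed.

Lemma normaliser_double_coset g : normaliser mul inv O g ->
  double_coset mul O g = lcoset mul g O.
Proof.
move=> Ng; apply/seteqP; split=> [_ [a Oa [b Ob <-]]|].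
  have Oa' : O (mul (mul (inv g) a) g).
    by apply/Ng; rewrite mulgA mulgK mulKVg.
  exists (mul (mul (mul (inv g) a) g) b); first exact: subgroupM.
  by rewrite !mulgA mulgV mul1g.
move=> _ [x Ox <-]; exists one; first exact: subgroup1.
by exists x => //; rewrite mul1g.
Qed.

Lemma normaliserMr g o : normaliser mul inv O g -> O o ->
  normaliser mul inv O (mul g o).
Proof.
move=> Ng Oo x; rewrite invMg.
have -> : mul (mul (mul g o) x) (mul (inv o) (inv g)) =
    mul (mul g (mul (mul o x) (inv o))) (inv g) by rewrite !mulgA.
rewrite -Ng; split=> [Ox|Ooxo]; first by apply: subgroupM (subgroupM _ _) (subgroupV _).
have := subgroupM (subgroupM (subgroupV Oo) Ooxo) Oo.
by rewrite !mulgA mulVg mul1g mulgKV.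
Qed.

Lemma haar_measure_lcoset g : haar_measure_is mul O (lcoset mul g O) 1.
Proof.
rewrite /haar_measure_is.
suff -> : [set K | exists h, K = lcoset mul h O /\ K `<=` lcoset mul g O] =
    [set lcoset mul g O] by exact: card_set1.
apply/seteqP; split=> [_ [h [-> hg]]|_ ->]; last by exists g; split.
by apply: lcoset_eq; apply: hg; exact: lcoset_refl.
Qed.

End Subgroup.
End Group.

Section TopologicalGroup.
Variables (G : topologicalType) (mul : G -> G -> G) (one : G) (inv : G -> G).
Hypothesis HG : topological_group mul one inv.

Let Ggrp : is_group mul one inv. Proof. by case: HG. Qed.

Lemma continuous_mull g : continuous (mul g).
Proof.
case: HG => _ cmul _ y.
exact: (continuous_comp (cvg_pair (cvg_cst g) cvg_id) (cmul (g, y))).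
Qed.

Lemma open_lcoset g U : open U -> open (lcoset mul g U).
Proof.
have -> : lcoset mul g U = mul (inv g) @^-1` U.
  apply/seteqP; split=> [_ [u Uu <-]|x Ux]; first by rewrite /= (mulKg Ggrp).
  by exists (mul (inv g) x); rewrite ?(mulKVg Ggrp).
by apply: open_comp => x _; exact: continuous_mull.
Qed.

Lemma compact_lcoset g U : compact U -> compact (lcoset mul g U).
Proof.
by apply: continuous_compact; apply: continuous_subspaceT; exact: continuous_mull.
Qed.

Lemma double_coset_property_N_compact :
  double_coset_property mul one inv -> N_compact mul one inv.
Proof.
move=> dcp O [HO cO oO]; set N := normaliser mul inv O.
pose cosets := [set K | exists2 g, N g & K = lcoset mul g O].
have fin_cosets : finite_set cosets.
  apply: sub_finite_set (dcp O (And3 HO cO oO) 1%N isT) => _ [g Ng ->].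
  split; last exact: (haar_measure_lcoset Ggrp HO).
  by exists g; rewrite (normaliser_double_coset Ggrp HO).
have -> : N = \bigcup_(K in cosets) K.
  apply/seteqP; split=> [g Ng|_ [_ [g Ng ->] [x Ox <-]]].
    by exists (lcoset mul g O); [exists g | exact: (lcoset_refl Ggrp HO)].
  exact: (normaliserMr Ggrp HO).
by apply: compact_bigcup_finite fin_cosets _ => _ [g _ ->]; exact: compact_lcoset.
Qed.

End TopologicalGroup.

Lemma open_stabiliser (G : topologicalType) (C : Type) (rho : G -> C -> C) c :
  perm_continuous rho -> open [set g | rho g c = c].
Proof.
move=> rho_cont; rewrite openE => g /= gc; have := rho_cont g _ (finite_set1 c).
by apply: filterS => h /(_ c erefl); rewrite /= gc.
Qed.

Section WeylTransitiveAction.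
Variables (G : topologicalType) (mul : G -> G -> G) (one : G) (inv : G -> G).
Variables (W : Type) (mulW : W -> W -> W) (oneW : W) (invW : W -> W) (S : set W).
Variables (C : Type) (delta : C -> C -> W) (rho : G -> C -> C) (c0 : C).
Hypotheses (Ggrp : is_group mul one inv)
  (Hact : type_preserving_action mul one delta rho) (Hwt : weyl_transitive delta rho).

Lemma action1 c : rho one c = c. Proof. by case: Hact. Qed.

Lemma actionM g h c : rho (mul g h) c = rho g (rho h c). Proof. by case: Hact. Qed.

Lemma actionK g c : rho (inv g) (rho g c) = c.
Proof. by rewrite -actionM (mulVg Ggrp) action1. Qed.

Let stab := [set g | rho g c0 = c0].
Let sphere w := [set d | delta c0 d = w].

Lemma stabV g : stab g -> stab (inv g).
Proof. by rewrite /stab /= => gc0; rewrite -{1}gc0 actionK. Qed.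

Variable O : set G.
Hypothesis HO : is_subgroup mul one inv O.

Let lcosets_in D := [set K | exists h, K = lcoset mul h O /\ K `<=` D].

Variables (X Y : set G).
Hypotheses (stab_cover : stab `<=` \bigcup_(x in X) lcoset mul x (O `&` stab))
  (O_cover : O `<=` \bigcup_(y in Y) lcoset mul y (O `&` stab)).

Lemma sphere_sub_image g :
  sphere (delta c0 (rho g c0)) `<=`
  [set rho (mul (mul t.1.1 (xget one t.1.2)) t.2) c0 |
    t in X `*` lcosets_in (double_coset mul O g) `*` Y].
Proof.
move=> d /= c0d; have [h [hc0 hgd]] := Hwt (esym c0d).
have [x Xx [u [Ou _] xu]] := stab_cover hc0.
pose K := lcoset mul (mul u g) O.
have K_in : lcosets_in (double_coset mul O g) K.
  by exists (mul u g); rewrite /K; split=> //; exact: (lcoset_sub_double_coset Ou).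
have /(lcoset_eq Ggrp HO) : K (xget one K).
  by apply: xgetPex; exists (mul u g); exact: (lcoset_refl Ggrp HO).
move=> KE; have : lcoset mul (xget one K) O (mul u g).
  by rewrite KE; exact: (lcoset_refl Ggrp HO).
case=> z Oz ugz; have [y Yy [u' [_ u'c0] yu']] := O_cover Oz.
exists (x, K, y) => //=.
rewrite -hgd -xu -!actionM -[mul (mul x u) g](mulgA Ggrp) -ugz -yu'.
by rewrite !(mulgA Ggrp) [in RHS]actionM u'c0.
Qed.

Variables (a m : nat).
Hypotheses (cardX : X #<= `I_a) (cardY : Y #<= `I_m).

Lemma sphere_card_le g n : haar_measure_is mul O (double_coset mul O g) n ->
  sphere (delta c0 (rho g c0)) #<= `I_(a * n * m).
Proof.
move=> /card_eqPle[Dn _].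
apply: card_le_trans (subset_card_le (sphere_sub_image (g := g))) _.
apply: card_le_trans (card_image_le _ _) _.
by apply: card_le_setX_II => //; exact: card_le_setX_II.
Qed.

Hypotheses (HW : coxeter_system mulW oneW invW S) (HB : is_building mulW oneW S delta)
  (HT : thick_building oneW S delta).

Lemma double_coset_length_le g n k :
  haar_measure_is mul O (double_coset mul O g) n ->
  coxeter_length mulW oneW S (delta c0 (rho g c0)) k -> (k <= a * n * m)%N.
Proof.
move=> Dn /(injfun_II_sphere HW HB HT c0)[f].
have := card_le_trans (inj_card_le f) (sphere_card_le Dn); rewrite card_le_II.
by apply: leq_trans; exact/ltnW/ltn_expl.
Qed.

Lemma finite_double_cosets_of_measure n : finite_set S ->
  finite_set [set D | (exists g, D = double_coset mul O g) /\
                      haar_measure_is mul O D n].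
Proof.
move=> finS; have finX : finite_set X.
  by apply/finite_set_leP; exists a.
pose rep w := xget one [set g | delta c0 (rho g c0) = w].
apply: (sub_finite_set (B := [set double_coset mul O
    (mul (mul (inv t.1.2) (rep t.1.1)) t.2) |
    t in word_ball mulW oneW S (a * n * m) `*` X `*` X])); last first.
  by apply/finite_image/finite_setX/finX/finite_setX/finX/finite_word_ball.
move=> _ [[g ->] Dn]; set w := delta c0 (rho g c0).
have [k wk] : exists k, coxeter_length mulW oneW S w k.
  by case: HW => _ _ genS _; exact: coxeter_length_exists.
have /= rep_w : [set g | delta c0 (rho g c0) = w] (rep w).
  by apply: xgetPex; exists g.
(* g = h (rep w) b^-1 with h, b in the stabiliser of c0. *)
have [h [hc0 hrep]] := Hwt rep_w.
pose b := mul (mul (inv g) h) (rep w).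
have stab_b : stab b by rewrite /stab /= !actionM hrep actionK.
have [x Xx [u [Ou _] xu]] := stab_cover (stabV hc0).
have [y Xy [u' [Ou' _] yu']] := stab_cover (stabV stab_b).
exists (w, x, y) => /=.
  split=> //; split=> //; exists k; last by case: wk.
  exact: (double_coset_length_le Dn wk).
have gb : mul g b = mul h (rep w).
  by rewrite /b !(mulgA Ggrp) (mulgV Ggrp) (mul1g Ggrp).
rewrite /= -(double_cosetM Ggrp HO _ (subgroupV HO Ou) Ou').
rewrite -[g](mulgK Ggrp b) gb.
by rewrite -yu' -[h](invgK Ggrp) -xu (invMg Ggrp) !(mulgA Ggrp).
Qed.

End WeylTransitiveAction.

Theorem weyl_transitive_double_coset_property
  (G : topologicalType) (mul : G -> G -> G) (one : G) (inv : G -> G)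
  (W : Type) (mulW : W -> W -> W) (oneW : W) (invW : W -> W) (S : set W)
  (C : Type) (delta : C -> C -> W) (rho : G -> C -> C) (c0 : C) :
  topological_group mul one inv -> coxeter_system mulW oneW invW S ->
  finite_set S -> is_building mulW oneW S delta -> thick_building oneW S delta ->
  type_preserving_action mul one delta rho -> perm_continuous rho ->
  compact_stabilisers rho -> weyl_transitive delta rho ->
  double_coset_property mul one inv.
Proof.
move=> HG HW finS HB HT Hact rho_cont cpt_stab Hwt O [HO cO oO] n _.
have Ggrp : is_group mul one inv by case: HG.
pose U := O `&` [set g | rho g c0 = c0].
have oU : open U by apply: openI oO (open_stabiliser c0 rho_cont).
have U1 : U one by split; [exact: (subgroup1 HO) | exact: (action1 Hact)].
have lcoset_U x : lcoset mul x U x by exists one => //; rewrite (mulg1 Ggrp).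
have oU_x x : open (lcoset mul x U) := open_lcoset HG x oU.
have [X /finite_set_leP[a cardX] stab_cover] :=
  compact_finite_cover (cpt_stab c0) oU_x (fun x _ => lcoset_U x).
have [Y /finite_set_leP[m cardY] O_cover] :=
  compact_finite_cover cO oU_x (fun x _ => lcoset_U x).
exact: (finite_double_cosets_of_measure Ggrp Hact Hwt HO stab_cover O_cover
  cardX cardY HW HB HT).
Qed.

Theorem proposition4p1
  (G : topologicalType) (mul : G -> G -> G) (one : G) (inv : G -> G)
  (W : Type) (mulW : W -> W -> W) (oneW : W) (invW : W -> W) (S : set W)
  (C : Type) (delta : C -> C -> W) (rho : G -> C -> C) :
  topological_group mul one inv ->
  tdlc G ->
  coxeter_system mulW oneW invW S ->
  finite_set S ->
  is_building mulW oneW S delta ->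
  locally_finite_building S delta ->
  thick_building oneW S delta ->
  type_preserving_action mul one delta rho ->
  perm_continuous rho ->
  compact_stabilisers rho ->
  weyl_transitive delta rho ->
  double_coset_property mul one inv /\ N_compact mul one inv.
Proof.
move=> HG _ HW finS HB _ HT Hact rho_cont cpt_stab Hwt.
have [[c0 _] _ _ _] := HB.
have dcp := weyl_transitive_double_coset_property c0 HG HW finS HB HT Hact
  rho_cont cpt_stab Hwt.
by split=> //; exact: double_coset_property_N_compact.
Qed.
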